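(* Let $q_0>0$ and $\theta_+\in(0,\pi)$. Then $$q(x,t)=\frac{q_0e^{2iq_0^2t}\big[e^{i\theta_+}e^{2q_0x\sin\theta_+}+e^{-i\theta_+}e^{2q_0^2t\sin(2\theta_+)}\big]}{e^{2q_0x\sin\theta_+}+e^{2q_0^2t\sin(2\theta_+)}}$$ is a smooth solution on $\mathbb{R}^2$ of the nonlocal reverse space-time NLS equation $iq_t(x,t)=q_{xx}(x,t)-2q^2(x,t)q(-x,-t)$, and $q(x,t)\to q_0e^{i(2q_0^2t\pm\theta_+)}$ as $x\to\pm\infty$. *)

From Stdlib Require Import Reals List.
Open Scope R_scope.

Record Cx := mkC { Re : R; Im : R }.

Definition RtoC (a : R) : Cx := mkC a 0.
Definition Ci : Cx := mkC 0 1.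
Definition Cadd (z w : Cx) : Cx := mkC (Re z + Re w) (Im z + Im w).
Definition Csub (z w : Cx) : Cx := mkC (Re z - Re w) (Im z - Im w).
Definition Cmul (z w : Cx) : Cx :=
  mkC (Re z * Re w - Im z * Im w) (Re z * Im w + Im z * Re w).
Definition Cinv (z : Cx) : Cx :=
  mkC (Re z / (Re z ^ 2 + Im z ^ 2)) (- Im z / (Re z ^ 2 + Im z ^ 2)).
Definition Cdiv (z w : Cx) : Cx := Cmul z (Cinv w).
Definition Cexp (z : Cx) : Cx := mkC (exp (Re z) * cos (Im z)) (exp (Re z) * sin (Im z)).
Definition Cmod (z : Cx) : R := sqrt (Re z ^ 2 + Im z ^ 2).

Definition qsol (q0 th : R) (x t : R) : Cx :=
  Cdiv
    (Cmul (RtoC q0)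
       (Cmul (Cexp (mkC 0 (2 * q0 ^ 2 * t)))
          (Cadd (Cmul (Cexp (mkC 0 th)) (RtoC (exp (2 * q0 * x * sin th))))
                (Cmul (Cexp (mkC 0 (- th))) (RtoC (exp (2 * q0 ^ 2 * t * sin (2 * th))))))))
    (RtoC (exp (2 * q0 * x * sin th) + exp (2 * q0 ^ 2 * t * sin (2 * th)))).

Definition cont2 (g : R -> R -> R) : Prop :=
  forall x t eps, 0 < eps -> exists d, 0 < d /\
    forall y s, Rabs (y - x) < d -> Rabs (s - t) < d -> Rabs (g y s - g x t) < eps.

(* iter_partials l f : f is continuous and the iterated partial derivatives
   in the directions listed in l (true = d/dx, false = d/dt) exist everywhere
   and are (jointly) continuous. *)
Fixpoint iter_partials (l : list bool) (f : R -> R -> R) : Prop :=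
  cont2 f /\
  match l with
  | nil => True
  | d :: l' => exists g : R -> R -> R,
      (forall x t, if d then derivable_pt_lim (fun y => f y t) x (g x t)
                        else derivable_pt_lim (fun s => f x s) t (g x t))
      /\ iter_partials l' g
  end.

Definition smooth2 (f : R -> R -> R) : Prop := forall l, iter_partials l f.
Definition Csmooth2 (f : R -> R -> Cx) : Prop :=
  smooth2 (fun x t => Re (f x t)) /\ smooth2 (fun x t => Im (f x t)).

Definition Cpartial_x (f g : R -> R -> Cx) : Prop :=
  forall x t, derivable_pt_lim (fun y => Re (f y t)) x (Re (g x t)) /\
              derivable_pt_lim (fun y => Im (f y t)) x (Im (g x t)).
Definition Cpartial_t (f g : R -> R -> Cx) : Prop :=
  forall x t, derivable_pt_lim (fun s => Re (f x s)) t (Re (g x t)) /\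
              derivable_pt_lim (fun s => Im (f x s)) t (Im (g x t)).

Definition Clim_pinf (f : R -> Cx) (L : Cx) : Prop :=
  forall eps, 0 < eps -> exists M, forall x, M < x -> Cmod (Csub (f x) L) < eps.
Definition Clim_minf (f : R -> Cx) (L : Cx) : Prop :=
  forall eps, 0 < eps -> exists M, forall x, x < M -> Cmod (Csub (f x) L) < eps.

(* Put ω = 2 q0² and T = (e^{2 q0 x sin θ} - e^{ω t sin 2θ}) / (e^{2 q0 x sin θ} + e^{ω t sin 2θ}),
   a tanh-shaped kink. Then q = q0 e^{iωt} (cos θ + i sin θ T), and T solves the Riccati
   equations T_x = q0 sin θ (1 - T²), T_t = -q0² sin 2θ (1 - T²), and is odd under
   (x, t) ↦ (-x, -t). Hence the components of q and all their partial derivatives are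
   polynomials in T, cos ωt and sin ωt, which gives smoothness and turns the equation into a
   polynomial identity modulo cos² + sin² = 1. Finally |q - q0 e^{i(ωt ± θ)}| = q0 sin θ (1 ∓ T)
   and T → ±1 as x → ±∞. *)

From Pilot Require Import Defs.
From Coquelicot Require Import Coquelicot.
From Stdlib Require Import Reals Lra Nsatz FunctionalExtensionality.
(* Coquelicot's complex numbers shadow [Re], [Im], [RtoC], [Cinv], [Cdiv], [Cmod], ... *)
Import Defs.
Open Scope R_scope.

Definition jointly_continuous (f : R -> R -> R) : Prop :=
  forall p : R * R, continuous (fun z : R * R => f (fst z) (snd z)) p.

Lemma cont2_of_jointly_continuous f : jointly_continuous f -> cont2 f.
Proof.
  intros Hf x t eps Heps.
  destruct (Hf (x, t) (fun y => Rabs (y - f x t) < eps)) as [d Hd].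
  - exists (mkposreal eps Heps). now intros y Hy.
  - exists d. split; [apply cond_pos |].
    intros y s Hy Hs. apply (Hd (y, s)). now split.
Qed.

Lemma jointly_continuous_const c : jointly_continuous (fun _ _ => c).
Proof. intros p. apply continuous_const. Qed.

Lemma jointly_continuous_plus f g :
  jointly_continuous f -> jointly_continuous g ->
  jointly_continuous (fun x t => f x t + g x t).
Proof. intros Hf Hg p. now apply (continuous_plus (fun z => f _ _) (fun z => g _ _)). Qed.

Lemma jointly_continuous_opp f :
  jointly_continuous f -> jointly_continuous (fun x t => - f x t).
Proof. intros Hf p. now apply (continuous_opp (fun z => f _ _)). Qed.

Lemma jointly_continuous_mult f g :
  jointly_continuous f -> jointly_continuous g ->
  jointly_continuous (fun x t => f x t * g x t).
Proof. intros Hf Hg p. now apply (continuous_mult (fun z => f _ _) (fun z => g _ _)). Qed.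

Lemma jointly_continuous_inv f :
  jointly_continuous f -> (forall x t, f x t <> 0) ->
  jointly_continuous (fun x t => / f x t).
Proof.
  intros Hf Hnz p. apply (continuous_comp (fun z => f (fst z) (snd z)) Rinv); [apply Hf |].
  now apply continuous_Rinv.
Qed.

Lemma jointly_continuous_fst (h : R -> R) :
  (forall x, continuous h x) -> jointly_continuous (fun x _ => h x).
Proof. intros Hh [x t]. apply (continuous_comp fst h); [apply continuous_fst | apply Hh]. Qed.

Lemma jointly_continuous_snd (h : R -> R) :
  (forall t, continuous h t) -> jointly_continuous (fun _ t => h t).
Proof. intros Hh [x t]. apply (continuous_comp snd h); [apply continuous_snd | apply Hh]. Qed.

Definition partial (d : bool) (f g : R -> R -> R) : Prop :=
  forall x t, if d then derivable_pt_lim (fun y => f y t) x (g x t)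
              else derivable_pt_lim (fun s => f x s) t (g x t).

Lemma derivable_pt_lim_eq_value f x l l' :
  derivable_pt_lim f x l -> l = l' -> derivable_pt_lim f x l'.
Proof. now intros H <-. Qed.

Lemma partial_const d c : partial d (fun _ _ => c) (fun _ _ => 0).
Proof. intros x t. destruct d; apply derivable_pt_lim_const. Qed.

Lemma partial_plus d f g f' g' :
  partial d f f' -> partial d g g' ->
  partial d (fun x t => f x t + g x t) (fun x t => f' x t + g' x t).
Proof.
  intros Hf Hg x t. specialize (Hf x t). specialize (Hg x t). destruct d.
  - exact (derivable_pt_lim_plus (fun y => f y t) (fun y => g y t) _ _ _ Hf Hg).
  - exact (derivable_pt_lim_plus (fun s => f x s) (fun s => g x s) _ _ _ Hf Hg).
Qed.

Lemma partial_mult d f g f' g' :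
  partial d f f' -> partial d g g' ->
  partial d (fun x t => f x t * g x t) (fun x t => f' x t * g x t + f x t * g' x t).
Proof.
  intros Hf Hg x t. specialize (Hf x t). specialize (Hg x t). destruct d.
  - exact (derivable_pt_lim_mult (fun y => f y t) (fun y => g y t) _ _ _ Hf Hg).
  - exact (derivable_pt_lim_mult (fun s => f x s) (fun s => g x s) _ _ _ Hf Hg).
Qed.

Lemma smooth2_of_partial_closed (S : (R -> R -> R) -> Prop) :
  (forall f, S f -> jointly_continuous f) ->
  (forall d f, S f -> exists g, S g /\ partial d f g) ->
  forall f, S f -> smooth2 f.
Proof.
  intros Hcont Hpartial f Hf l. revert f Hf.
  induction l as [| d l IH]; intros f Hf; simpl.
  all: split; [now apply cont2_of_jointly_continuous, Hcont |].
  - exact I.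
  - destruct (Hpartial d f Hf) as [g [Hg Hfg]]. exists g. split; [exact Hfg | now apply IH].
Qed.

Section PolynomialExpressions.

Variable atom : Type.

Inductive pexpr : Type :=
  | PConst (r : R)
  | PAtom (a : atom)
  | PAdd (e1 e2 : pexpr)
  | PMul (e1 e2 : pexpr).

Variable atom_fun : atom -> R -> R -> R.
Variable atom_partial : bool -> atom -> pexpr.

Fixpoint peval (e : pexpr) (x t : R) : R :=
  match e with
  | PConst r => r
  | PAtom a => atom_fun a x t
  | PAdd e1 e2 => peval e1 x t + peval e2 x t
  | PMul e1 e2 => peval e1 x t * peval e2 x t
  end.

Fixpoint pderiv (d : bool) (e : pexpr) : pexpr :=
  match e with
  | PConst _ => PConst 0
  | PAtom a => atom_partial d a
  | PAdd e1 e2 => PAdd (pderiv d e1) (pderiv d e2)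
  | PMul e1 e2 => PAdd (PMul (pderiv d e1) e2) (PMul e1 (pderiv d e2))
  end.

Hypothesis atom_fun_continuous : forall a, jointly_continuous (atom_fun a).
Hypothesis atom_partialP : forall d a, partial d (atom_fun a) (peval (atom_partial d a)).

Lemma peval_continuous e : jointly_continuous (peval e).
Proof.
  induction e; simpl.
  - apply jointly_continuous_const.
  - apply atom_fun_continuous.
  - now apply jointly_continuous_plus.
  - now apply jointly_continuous_mult.
Qed.

Lemma peval_partial d e : partial d (peval e) (peval (pderiv d e)).
Proof.
  induction e; simpl.
  - apply partial_const.
  - apply atom_partialP.
  - now apply partial_plus.
  - now apply partial_mult.
Qed.

Lemma peval_smooth2 e : smooth2 (peval e).
Proof.
  apply (smooth2_of_partial_closed (fun f => exists e, f = peval e)); [| | now exists e].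
  - intros f [e' ->]. apply peval_continuous.
  - intros d f [e' ->]. exists (peval (pderiv d e')). split; [now eexists | apply peval_partial].
Qed.

End PolynomialExpressions.

Arguments PConst {atom}.
Arguments PAtom {atom}.
Arguments PAdd {atom}.
Arguments PMul {atom}.
Arguments peval {atom}.
Arguments pderiv {atom}.

Lemma continuous_scale (a x : R) : continuous (fun y => a * y) x.
Proof. apply (@ex_derive_continuous R_AbsRing R_NormedModule). auto_derive. exact I. Qed.

Lemma Rabs_mult_lt_of_lt_div k u eps : 0 < k -> Rabs u < eps / k -> Rabs (k * u) < eps.
Proof.
  intros Hk Hu. rewrite Rabs_mult, Rabs_pos_eq by lra.
  apply (Rmult_lt_compat_l k) in Hu; [| exact Hk].
  now replace (k * (eps / k)) with eps in Hu by (field; lra).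
Qed.

Definition kink (a b x t : R) : R :=
  (exp (a * x) - exp (b * t)) / (exp (a * x) + exp (b * t)).

Lemma exp_sum_pos u v : 0 < exp u + exp v.
Proof. apply Rplus_lt_0_compat; apply exp_pos. Qed.

Lemma kink_continuous a b : jointly_continuous (kink a b).
Proof.
  assert (Hx : jointly_continuous (fun x _ => exp (a * x))).
  { apply jointly_continuous_fst. intros x.
    apply continuous_exp_comp, continuous_scale. }
  assert (Ht : jointly_continuous (fun _ t => exp (b * t))).
  { apply jointly_continuous_snd. intros t.
    apply continuous_exp_comp, continuous_scale. }
  unfold kink, Rdiv. apply jointly_continuous_mult.
  - apply jointly_continuous_plus; [exact Hx |].
    now apply jointly_continuous_opp.
  - apply jointly_continuous_inv; [now apply jointly_continuous_plus |].
    intros x t. apply Rgt_not_eq, exp_sum_pos.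
Qed.

Lemma kink_dx a b x t :
  derivable_pt_lim (fun y => kink a b y t) x (a / 2 * (1 - kink a b x t ^ 2)).
Proof.
  apply is_derive_Reals. unfold kink. pose proof (exp_sum_pos (a * x) (b * t)).
  auto_derive; [lra |]. field. lra.
Qed.

Lemma kink_dt a b x t :
  derivable_pt_lim (fun s => kink a b x s) t (- (b / 2) * (1 - kink a b x t ^ 2)).
Proof.
  apply is_derive_Reals. unfold kink. pose proof (exp_sum_pos (a * x) (b * t)).
  auto_derive; [lra |]. field. lra.
Qed.

Lemma kink_opp a b x t : kink a b (- x) (- t) = - kink a b x t.
Proof.
  unfold kink. rewrite <- !Ropp_mult_distr_r, !exp_Ropp.
  pose proof (exp_pos (a * x)). pose proof (exp_pos (b * t)).
  field. split; lra.
Qed.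

Lemma one_sub_kink a b x t : 1 - kink a b x t = 2 / (1 + exp (a * x - b * t)).
Proof.
  replace (a * x - b * t) with (a * x + - (b * t)) by ring.
  unfold kink. rewrite exp_plus, exp_Ropp.
  pose proof (exp_pos (a * x)). pose proof (exp_pos (b * t)).
  field. split; lra.
Qed.

Lemma kink_pinf a b t : 0 < a ->
  forall eps, 0 < eps -> exists M, forall x, M < x -> Rabs (1 - kink a b x t) < eps.
Proof.
  intros Ha eps Heps. exists ((b * t + ln (2 / eps)) / a). intros x Hx.
  assert (Hgrow : 2 / eps < exp (a * x - b * t)).
  { rewrite <- (exp_ln (2 / eps)) by (apply Rdiv_lt_0_compat; lra).
    apply exp_increasing. apply (Rmult_lt_compat_l a) in Hx; [| exact Ha].
    replace (a * ((b * t + ln (2 / eps)) / a)) with (b * t + ln (2 / eps)) in Hx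
      by (field; lra).
    lra. }
  pose proof (exp_pos (a * x - b * t)).
  rewrite one_sub_kink, Rabs_pos_eq by (apply Rlt_le, Rdiv_lt_0_compat; lra).
  apply Rlt_div_l; [lra |].
  apply (Rmult_lt_compat_r eps) in Hgrow; [| exact Heps].
  replace (2 / eps * eps) with 2 in Hgrow by (field; lra).
  nra.
Qed.

Lemma kink_minf a b t : 0 < a ->
  forall eps, 0 < eps -> exists M, forall x, x < M -> Rabs (1 + kink a b x t) < eps.
Proof.
  intros Ha eps Heps. destruct (kink_pinf a b (- t) Ha eps Heps) as [M HM].
  exists (- M). intros x Hx.
  specialize (HM (- x) ltac:(lra)). rewrite kink_opp in HM.
  now replace (1 + kink a b x t) with (1 - - kink a b x t) by ring.
Qed.

Inductive wave_atom := Kink | CosW | SinW.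

Section Solution.

Variables q0 th : R.

Definition wave_fun (a : wave_atom) (x t : R) : R :=
  match a with
  | Kink => kink (2 * q0 * sin th) (2 * q0 ^ 2 * sin (2 * th)) x t
  | CosW => cos (2 * q0 ^ 2 * t)
  | SinW => sin (2 * q0 ^ 2 * t)
  end.

Definition one_minus_kink_sq : pexpr wave_atom :=
  PAdd (PConst 1) (PMul (PConst (-1)) (PMul (PAtom Kink) (PAtom Kink))).

Definition wave_partial (d : bool) (a : wave_atom) : pexpr wave_atom :=
  match d, a with
  | true, Kink => PMul (PConst (q0 * sin th)) one_minus_kink_sq
  | true, _ => PConst 0
  | false, Kink => PMul (PConst (- (q0 ^ 2 * sin (2 * th)))) one_minus_kink_sq
  | false, CosW => PMul (PConst (- (2 * q0 ^ 2))) (PAtom SinW)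
  | false, SinW => PMul (PConst (2 * q0 ^ 2)) (PAtom CosW)
  end.

Notation wave := (peval wave_fun).
Notation wave_deriv := (pderiv wave_partial).

Lemma wave_fun_continuous a : jointly_continuous (wave_fun a).
Proof.
  destruct a; simpl.
  - apply kink_continuous.
  - apply (jointly_continuous_snd (fun t => cos (2 * q0 ^ 2 * t))). intros t.
    apply continuous_cos_comp, continuous_scale.
  - apply (jointly_continuous_snd (fun t => sin (2 * q0 ^ 2 * t))). intros t.
    apply continuous_sin_comp, continuous_scale.
Qed.

Lemma wave_partialP d a : partial d (wave_fun a) (wave (wave_partial d a)).
Proof.
  intros x t. destruct d, a; simpl; try apply derivable_pt_lim_const.
  - eapply derivable_pt_lim_eq_value; [apply kink_dx | field].
  - eapply derivable_pt_lim_eq_value; [apply kink_dt | field].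
  - apply is_derive_Reals. auto_derive; [exact I | ring].
  - apply is_derive_Reals. auto_derive; [exact I | ring].
Qed.

Definition wave_cx (re im : pexpr wave_atom) (x t : R) : Cx := mkC (wave re x t) (wave im x t).

Lemma wave_cx_smooth2 re im : Csmooth2 (wave_cx re im).
Proof. split; apply (peval_smooth2 _ _ _ wave_fun_continuous wave_partialP). Qed.

Lemma wave_cx_partial_x re im :
  Cpartial_x (wave_cx re im) (wave_cx (wave_deriv true re) (wave_deriv true im)).
Proof. intros x t. split; apply (peval_partial _ _ _ wave_partialP true). Qed.

Lemma wave_cx_partial_t re im :
  Cpartial_t (wave_cx re im) (wave_cx (wave_deriv false re) (wave_deriv false im)).
Proof. intros x t. split; apply (peval_partial _ _ _ wave_partialP false). Qed.

Definition q_re : pexpr wave_atom :=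
  PMul (PConst q0) (PAdd (PMul (PAtom CosW) (PConst (cos th)))
                         (PMul (PConst (- sin th)) (PMul (PAtom SinW) (PAtom Kink)))).
Definition q_im : pexpr wave_atom :=
  PMul (PConst q0) (PAdd (PMul (PAtom SinW) (PConst (cos th)))
                         (PMul (PConst (sin th)) (PMul (PAtom CosW) (PAtom Kink)))).

Lemma qsol_wave : qsol q0 th = wave_cx q_re q_im.
Proof.
  apply functional_extensionality; intros x; apply functional_extensionality; intros t.
  unfold qsol, wave_cx, Cdiv, Cmul, Cadd, Cinv, Cexp, RtoC, q_re, q_im; cbn [Re Im peval wave_fun].
  rewrite exp_0, cos_neg, sin_neg. unfold kink.
  replace (2 * q0 * sin th * x) with (2 * q0 * x * sin th) by ring.
  replace (2 * q0 ^ 2 * sin (2 * th) * t) with (2 * q0 ^ 2 * t * sin (2 * th)) by ring.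
  pose proof (exp_sum_pos (2 * q0 * x * sin th) (2 * q0 ^ 2 * t * sin (2 * th))).
  f_equal; field; nra.
Qed.

Lemma wave_nls x t :
  Cmul Ci (wave_cx (wave_deriv false q_re) (wave_deriv false q_im) x t) =
  Csub (wave_cx (wave_deriv true (wave_deriv true q_re))
                (wave_deriv true (wave_deriv true q_im)) x t)
       (Cmul (RtoC 2) (Cmul (Cmul (wave_cx q_re q_im x t) (wave_cx q_re q_im x t))
                            (wave_cx q_re q_im (- x) (- t)))).
Proof.
  unfold Cmul, Csub, RtoC, Ci, wave_cx, q_re, q_im.
  cbn [Re Im peval pderiv wave_partial wave_fun one_minus_kink_sq].
  replace (2 * q0 ^ 2 * - t) with (- (2 * q0 ^ 2 * t)) by ring.
  rewrite kink_opp, cos_neg, sin_neg, sin_2a.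
  pose proof (sin2_cos2 th) as Hth. pose proof (sin2_cos2 (2 * q0 ^ 2 * t)) as Hwt.
  unfold Rsqr in Hth, Hwt.
  (* [nsatz] fails on goals containing [^]. *)
  cbn [pow] in *.
  f_equal; nsatz.
Qed.

Lemma wave_dist_pinf x t :
  Cmod (Csub (wave_cx q_re q_im x t) (Cmul (RtoC q0) (Cexp (mkC 0 (2 * q0 ^ 2 * t + th))))) =
  Rabs (q0 * sin th * (1 - wave_fun Kink x t)).
Proof.
  unfold Cmod, Csub, Cmul, Cexp, RtoC, wave_cx, q_re, q_im; cbn [Re Im peval wave_fun].
  rewrite exp_0, cos_plus, sin_plus, <- sqrt_Rsqr_abs. f_equal.
  pose proof (sin2_cos2 (2 * q0 ^ 2 * t)) as Hwt. unfold Rsqr in *. cbn [pow] in *.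
  nsatz.
Qed.

Lemma wave_dist_minf x t :
  Cmod (Csub (wave_cx q_re q_im x t) (Cmul (RtoC q0) (Cexp (mkC 0 (2 * q0 ^ 2 * t - th))))) =
  Rabs (q0 * sin th * (1 + wave_fun Kink x t)).
Proof.
  unfold Cmod, Csub, Cmul, Cexp, RtoC, wave_cx, q_re, q_im; cbn [Re Im peval wave_fun].
  rewrite exp_0, cos_minus, sin_minus, <- sqrt_Rsqr_abs. f_equal.
  pose proof (sin2_cos2 (2 * q0 ^ 2 * t)) as Hwt. unfold Rsqr in *. cbn [pow] in *.
  nsatz.
Qed.

Hypothesis q0_pos : 0 < q0.
Hypothesis sin_th_pos : 0 < sin th.

Lemma wave_lim_pinf t :
  Clim_pinf (fun x => wave_cx q_re q_im x t) (Cmul (RtoC q0) (Cexp (mkC 0 (2 * q0 ^ 2 * t + th)))).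
Proof.
  intros eps Heps.
  assert (Hqs : 0 < q0 * sin th) by nra.
  destruct (kink_pinf (2 * q0 * sin th) (2 * q0 ^ 2 * sin (2 * th)) t ltac:(nra)
              (eps / (q0 * sin th)) ltac:(now apply Rdiv_lt_0_compat)) as [M HM].
  exists M. intros x Hx. rewrite wave_dist_pinf. now apply Rabs_mult_lt_of_lt_div, HM.
Qed.

Lemma wave_lim_minf t :
  Clim_minf (fun x => wave_cx q_re q_im x t) (Cmul (RtoC q0) (Cexp (mkC 0 (2 * q0 ^ 2 * t - th)))).
Proof.
  intros eps Heps.
  assert (Hqs : 0 < q0 * sin th) by nra.
  destruct (kink_minf (2 * q0 * sin th) (2 * q0 ^ 2 * sin (2 * th)) t ltac:(nra)
              (eps / (q0 * sin th)) ltac:(now apply Rdiv_lt_0_compat)) as [M HM].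
  exists M. intros x Hx. rewrite wave_dist_minf. now apply Rabs_mult_lt_of_lt_div, HM.
Qed.

End Solution.

Theorem mainTheorem11 (q0 th : R) (hq0 : 0 < q0) (hth1 : 0 < th) (hth2 : th < PI) :
  Csmooth2 (qsol q0 th) /\
  (exists qt qx qxx : R -> R -> Cx,
     Cpartial_t (qsol q0 th) qt /\ Cpartial_x (qsol q0 th) qx /\ Cpartial_x qx qxx /\
     forall x t,
       Cmul Ci (qt x t) =
       Csub (qxx x t)
            (Cmul (RtoC 2) (Cmul (Cmul (qsol q0 th x t) (qsol q0 th x t))
                                 (qsol q0 th (- x) (- t))))) /\
  (forall t, Clim_pinf (fun x => qsol q0 th x t)
                       (Cmul (RtoC q0) (Cexp (mkC 0 (2 * q0 ^ 2 * t + th))))) /\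
  (forall t, Clim_minf (fun x => qsol q0 th x t)
                       (Cmul (RtoC q0) (Cexp (mkC 0 (2 * q0 ^ 2 * t - th))))).
Proof.
  assert (hs : 0 < sin th) by now apply sin_gt_0.
  rewrite qsol_wave.
  split; [| split; [| split]].
  - apply wave_cx_smooth2.
  - do 3 eexists.
    split; [apply wave_cx_partial_t |].
    split; [apply wave_cx_partial_x |].
    split; [apply wave_cx_partial_x | apply wave_nls].
  - intros t. now apply wave_lim_pinf.
  - intros t. now apply wave_lim_minf.
Qed.
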